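(* Let $(X,d)$ be a metric space, $p>1$, $x_1,x_2,x_3\in X$ and $0\le r<t$. Then the function $$s\mapsto\sqrt{\bar H_p(x_1,r;x_2,s)}+\sqrt{\bar H_p(x_2,s;x_3,t)}$$ is increasing on $[t,+\infty)$, where $\bar H_p(x,r;y,t)=\mathfrak{M}_1(r,t)-\mathfrak{M}_{1-p}(r,t)\cos\big(d(x,y)\wedge\frac{\pi}{2}\big)$.
   Context: Power means: for $r,t\ge0$ and $q\neq0$, $\mathfrak{M}_q(r,t)=\big(\frac{r^q+t^q}{2}\big)^{1/q}$, except $\mathfrak{M}_q(r,t)=0$ when $q<0$ and $r=0$ or $t=0$. ''Increasing'' means non-decreasing. *)

From Stdlib Require Import Reals Lra.
Open Scope R_scope.

Definition is_metric {X : Type} (d : X -> X -> R) : Prop :=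
  (forall x y, 0 <= d x y) /\
  (forall x y, d x y = 0 <-> x = y) /\
  (forall x y, d x y = d y x) /\
  (forall x y z, d x z <= d x y + d y z).

(* Real power of a nonnegative base: 0^q := 0, r^q := Rpower r q for r > 0.
   Only used with q > 0 on possibly-zero bases, or with positive bases. *)
Definition rpow (r q : R) : R :=
  if Req_EM_T r 0 then 0 else Rpower r q.

Definition powmean (q r t : R) : R :=
  if Rlt_dec q 0 then
    (if Req_EM_T r 0 then 0
     else if Req_EM_T t 0 then 0
     else rpow ((rpow r q + rpow t q) / 2) (1 / q))
  else rpow ((rpow r q + rpow t q) / 2) (1 / q).

Definition Hbar {X : Type} (d : X -> X -> R) (p : R) (x : X) (r : R) (y : X) (t : R) : R :=
  powmean 1 r t - powmean (1 - p) r t * cos (Rmin (d x y) (PI / 2)).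

From Stdlib Require Import Reals Lra.
From Coquelicot Require Import Coquelicot.
Open Scope R_scope.

(* Both summands are square roots, and sqrt is monotone, so it
   suffices that each of the two quantities under a square root increases with
   s on [t, +oo).  With a := r or a := t the fixed argument (a <= s) and
   c := cos (d _ _ /\ pi/2) in [0, 1], each is

      M_1(a, s) - c * M_q(a, s),   q := 1 - p < 0.

   If a = 0 the second term vanishes and M_1(0, s) = s/2 increases.  If a > 0,
   then for s >= a the power mean M_q(a, s) is at most s (a mean never exceeds
   the larger argument) and its s-derivative is M_q(a,s) s^q / (s (a^q + s^q)),
   which is therefore at most 1/2.  By the mean value theorem M_q(a, .) is
   1/2-Lipschitz from above on [a, +oo), and since 0 <= c <= 1 this beats the
   slope 1/2 of M_1(a, s).  The file first unfolds the power means, then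
   proves the derivative bound, the Lipschitz estimate, the monotonicity of
   \bar H_p in each radius, and finally the theorem. *)

Lemma rpow_pos (x y : R) : 0 < x -> rpow x y = Rpower x y.
Proof. intros hx. unfold rpow. destruct (Req_EM_T x 0); [lra | reflexivity]. Qed.

Lemma powmean_one (a b : R) : 0 <= a -> 0 <= b -> powmean 1 a b = (a + b) / 2.
Proof.
  intros ha hb.
  assert (rpow_one : forall x, 0 <= x -> rpow x 1 = x).
  { intros x hx. unfold rpow. destruct (Req_EM_T x 0); [lra |].
    apply Rpower_1. lra. }
  unfold powmean. destruct (Rlt_dec 1 0); [lra |].
  replace (1 / 1) with 1 by field.
  rewrite (rpow_one a ha), (rpow_one b hb). apply rpow_one. lra.
Qed.

Lemma powmean_neg_zero_l (q s : R) : q < 0 -> powmean q 0 s = 0.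
Proof.
  intros hq. unfold powmean. destruct (Rlt_dec q 0); [| lra].
  destruct (Req_EM_T 0 0); [reflexivity | lra].
Qed.

Lemma powmean_comm (q a b : R) : powmean q a b = powmean q b a.
Proof.
  unfold powmean. destruct (Rlt_dec q 0).
  - destruct (Req_EM_T a 0), (Req_EM_T b 0); try reflexivity.
    now rewrite Rplus_comm.
  - now rewrite Rplus_comm.
Qed.

(* M_q(a, s) = ((a^q + s^q)/2)^(1/q), written with exp and ln so that it can be
   differentiated in s. *)
Definition negmean (q a s : R) : R :=
  exp (1 / q * ln ((exp (q * ln a) + exp (q * ln s)) / 2)).

Lemma powmean_negmean (q a s : R) : q < 0 -> 0 < a -> 0 < s ->
  powmean q a s = negmean q a s.
Proof.
  intros hq ha hs. unfold powmean, negmean. destruct (Rlt_dec q 0); [| lra].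
  destruct (Req_EM_T a 0); [lra |]. destruct (Req_EM_T s 0); [lra |].
  rewrite (rpow_pos a), (rpow_pos s) by lra. unfold Rpower.
  rewrite rpow_pos; [reflexivity |].
  pose proof (exp_pos (q * ln a)); pose proof (exp_pos (q * ln s)); lra.
Qed.

Lemma exp_le_compat (x y : R) : x <= y -> exp x <= exp y.
Proof.
  intros hxy. destruct (Rle_lt_or_eq_dec x y hxy) as [lt | ->]; [| lra].
  left. now apply exp_increasing.
Qed.

Lemma negpow_antitone (q a s : R) : q < 0 -> 0 < a -> a <= s ->
  exp (q * ln s) <= exp (q * ln a).
Proof.
  intros hq ha has. apply exp_le_compat.
  assert (ln a <= ln s) by (apply ln_le; lra). nra.
Qed.

Lemma negmean_le_right (q a s : R) : q < 0 -> 0 < a -> a <= s ->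
  negmean q a s <= s.
Proof.
  intros hq ha has. unfold negmean.
  set (S := exp (q * ln s)). set (A := exp (q * ln a)).
  assert (hSA : S <= A) by (apply negpow_antitone; lra).
  assert (hS : 0 < S) by apply exp_pos.
  assert (hlnS : q * ln s <= ln ((A + S) / 2)).
  { replace (q * ln s) with (ln S) by (unfold S; apply ln_exp).
    apply ln_le; lra. }
  rewrite <- (exp_ln s) by lra. apply exp_le_compat.
  assert (hq1 : 1 / q < 0) by (unfold Rdiv; rewrite Rmult_1_l; now apply Rinv_neg).
  assert (1 / q * ln ((A + S) / 2) <= 1 / q * (q * ln s)) by nra.
  replace (1 / q * (q * ln s)) with (ln s) in * by (field; lra). lra.
Qed.

Definition negmean_slope (q a s : R) : R :=
  exp (q * ln s) / (s * (exp (q * ln a) + exp (q * ln s))) * negmean q a s.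

Lemma negmean_derive (q a s : R) : q < 0 -> 0 < s ->
  is_derive (negmean q a) s (negmean_slope q a s).
Proof.
  intros hq hs. unfold negmean_slope, negmean.
  pose proof (exp_pos (q * ln a)); pose proof (exp_pos (q * ln s)).
  auto_derive.
  - repeat split; lra.
  - change ((exp (q * ln a) + exp (q * ln s)) * / 2)
      with ((exp (q * ln a) + exp (q * ln s)) / 2).
    field. repeat split; lra.
Qed.

Lemma negmean_slope_bounds (q a s : R) : q < 0 -> 0 < a -> a <= s ->
  0 <= negmean_slope q a s <= 1 / 2.
Proof.
  intros hq ha has.
  pose proof (negmean_le_right q a s hq ha has) as hm.
  pose proof (negpow_antitone q a s hq ha has) as hSA.
  unfold negmean_slope.
  set (S := exp (q * ln s)) in *. set (A := exp (q * ln a)) in *.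
  set (m := negmean q a s) in *.
  assert (hS : 0 < S) by apply exp_pos.
  assert (hm0 : 0 < m) by apply exp_pos.
  assert (hden : 0 < s * (A + S)) by nra.
  split.
  - apply Rmult_le_pos; [| lra]. left. now apply Rdiv_lt_0_compat.
  - apply Rmult_le_reg_r with (2 * (s * (A + S))); [lra |].
    replace (S / (s * (A + S)) * m * (2 * (s * (A + S)))) with (2 * S * m)
      by (field; lra).
    assert (S * m <= S * s) by (apply Rmult_le_compat_l; lra).
    assert (s * S <= s * A) by (apply Rmult_le_compat_l; lra).
    lra.
Qed.

Lemma nondecreasing_of_nonneg_derive (f df : R -> R) (x y : R) :
  x <= y ->
  (forall z, x <= z <= y -> is_derive f z (df z)) ->
  (forall z, x <= z <= y -> 0 <= df z) ->
  f x <= f y.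
Proof.
  intros hxy hder hpos.
  destruct (Rle_lt_or_eq_dec x y hxy) as [lt | ->]; [| lra].
  destruct (MVT_cor3 f df x y lt) as [z [hz1 [hz2 ->]]].
  - intros z h1 h2. apply is_derive_Reals, hder. lra.
  - pose proof (hpos z ltac:(lra)). nra.
Qed.

Lemma negmean_half_lipschitz (q a s1 s2 : R) :
  q < 0 -> 0 < a -> a <= s1 -> s1 <= s2 ->
  negmean q a s2 - negmean q a s1 <= (s2 - s1) / 2.
Proof.
  intros hq ha h1 h12.
  enough (s1 / 2 - negmean q a s1 <= s2 / 2 - negmean q a s2) by lra.
  apply (nondecreasing_of_nonneg_derive
           (fun s => s / 2 - negmean q a s)
           (fun s => 1 / 2 - negmean_slope q a s)); [lra | |].
  - intros z hz. apply (is_derive_minus (fun s => s / 2) (negmean q a)).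
    + auto_derive; [exact I | field].
    + apply negmean_derive; lra.
  - intros z hz. pose proof (negmean_slope_bounds q a z hq ha ltac:(lra)). lra.
Qed.

Lemma mean_gap_nondecreasing (q c a s1 s2 : R) :
  q < 0 -> 0 <= c <= 1 -> 0 <= a -> a <= s1 -> s1 <= s2 ->
  powmean 1 a s1 - powmean q a s1 * c <= powmean 1 a s2 - powmean q a s2 * c.
Proof.
  intros hq hc ha h1 h12.
  rewrite !powmean_one by lra.
  destruct (Req_dec a 0) as [-> | ha0].
  - rewrite !powmean_neg_zero_l by lra. lra.
  - rewrite !powmean_negmean by lra.
    pose proof (negmean_half_lipschitz q a s1 s2 hq ltac:(lra) h1 h12) as hlip.
    assert ((negmean q a s2 - negmean q a s1) * c <= (s2 - s1) / 2).
    { destruct (Rle_lt_dec 0 (negmean q a s2 - negmean q a s1)); nra. }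
    lra.
Qed.

Lemma cos_clipped_bounds (u : R) : 0 <= u -> 0 <= cos (Rmin u (PI / 2)) <= 1.
Proof.
  intros hu. pose proof PI_RGT_0. split; [| apply COS_bound].
  apply cos_ge_0; [| apply Rmin_r].
  assert (0 <= Rmin u (PI / 2)) by (apply Rmin_glb; lra). lra.
Qed.

Lemma Hbar_mono_right {X : Type} (d : X -> X -> R) (p : R) (x y : X) (a s1 s2 : R) :
  1 < p -> 0 <= d x y -> 0 <= a -> a <= s1 -> s1 <= s2 ->
  Hbar d p x a y s1 <= Hbar d p x a y s2.
Proof.
  intros hp hd ha h1 h12. unfold Hbar.
  apply mean_gap_nondecreasing; try lra. now apply cos_clipped_bounds.
Qed.

Lemma Hbar_mono_left {X : Type} (d : X -> X -> R) (p : R) (x y : X) (a s1 s2 : R) :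
  1 < p -> 0 <= d x y -> 0 <= a -> a <= s1 -> s1 <= s2 ->
  Hbar d p x s1 y a <= Hbar d p x s2 y a.
Proof.
  intros hp hd ha h1 h12. unfold Hbar.
  rewrite !(powmean_comm _ _ a).
  apply mean_gap_nondecreasing; try lra. now apply cos_clipped_bounds.
Qed.

Theorem mainTheorem16 (X : Type) (d : X -> X -> R) (Hd : is_metric d)
  (p : R) (hp : 1 < p) (x1 x2 x3 : X) (r t : R) (hr : 0 <= r) (hrt : r < t) :
  forall s1 s2 : R, t <= s1 -> s1 <= s2 ->
    sqrt (Hbar d p x1 r x2 s1) + sqrt (Hbar d p x2 s1 x3 t)
    <= sqrt (Hbar d p x1 r x2 s2) + sqrt (Hbar d p x2 s2 x3 t).
Proof.
  intros s1 s2 h1 h12.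
  destruct Hd as [d_nonneg _].
  apply Rplus_le_compat; apply sqrt_le_1_alt.
  - apply Hbar_mono_right; auto; lra.
  - apply Hbar_mono_left; auto; lra.
Qed.
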